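(* Let $n\ge4$, let $C=\mathrm{circ}(1,0,\ldots,0,1)$ of order $n-1$, let $X=2(CC^T+I_{n-1})^{-1}\left[ (n-1)I_{n-1}-J_{n-1}\right]$ and $Y=J_{n-1}+C^TX$. Then $Y=\mathrm{circ}(d_0,d_1,\ldots,d_{n-2})$ where \[d_0=\frac{1}{5}+\frac{4(n-1)}{\sqrt{5}}\left[\frac{2^{n-2}+(-3+\sqrt{5})^{n-2}}{2^{n-1}-(-3+\sqrt{5})^{n-1}} -\frac{2^{n-2}+(-3-\sqrt{5})^{n-2}}{2^{n-1}-(-3-\sqrt{5})^{n-1}}\right]\] and for $j=1,2,\ldots,n-2$, \[d_j=\frac{1}{5}+\frac{2^{n+1-j}(n-1)}{5+\sqrt{5}}\left[\frac{2(-3+\sqrt{5})^{j-1}}{2^{n-1}-(-3+\sqrt{5})^{n-1}} -\frac{(-3-\sqrt{5})^{j}}{2^{n-1}-(-3-\sqrt{5})^{n-1}}\right].\]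
   Context: For $c_0,\dots,c_{k-1}$, $\mathrm{circ}(c_0,\ldots,c_{k-1})$ denotes the $k\times k$ circulant matrix whose $(i,j)$-entry is $c_{(j-i)\bmod k}$. $J_{n-1}$ is the $(n-1)\times(n-1)$ all-ones matrix and $I_{n-1}$ the identity. Note $CC^T+I_{n-1}=\mathrm{circ}(3,1,0,\ldots,0,1)$ is invertible. ($X,Y$ are blocks of the Moore–Penrose inverse of the incidence matrix of the wheel graph $W_n$.) *)

From HB Require Import structures.
From mathcomp Require Import all_boot all_order all_algebra.
Set Implicit Arguments. Unset Strict Implicit. Unset Printing Implicit Defensive.
Import Order.TTheory GRing.Theory Num.Theory.
Local Open Scope ring_scope.

Definition circ {R : Type} (k : nat) (c : nat -> R) : 'M[R]_k :=
  \matrix_(i < k, j < k) c ((j + k - i) %% k)%N.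

Definition wheel_c {R : pzRingType} (k : nat) (m : nat) : R :=
  if (m == 0)%N || (m == k.-1)%N then 1 else 0.

Definition Jmx {R : pzRingType} (k : nat) : 'M[R]_k := const_mx 1.

From HB Require Import structures.
From mathcomp Require Import all_boot all_order all_algebra.
From mathcomp Require Import zify ring lra.
Import Order.TTheory GRing.Theory Num.Theory.
Local Open Scope ring_scope.
Set Implicit Arguments. Unset Strict Implicit.

(* A = C C^T + I is the circulant circ(3,1,0,...,0,1): on a circulant with generator z
   it acts as z_t |-> 3 z_t + z_(t-1) + z_(t+1) over Z/kZ, while C^T acts as
   z_t |-> z_t + z_(t-1).  So X is the circulant whose generator solves
   3 z_t + z_(t-1) + z_(t+1) = 2 (k [t = 0] - 1).  Away from t = 0 this is a linear
   recurrence with characteristic roots rho, sigma = (-3 +- sqrt 5)/2 of x^2 + 3x + 1,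
   and -2/5 + 2k/sqrt 5 (rho^t/(1 - rho^k) - sigma^t/(1 - sigma^k)) solves it; this
   sequence is k-periodic except for a jump of 2k at t = 0, which is exactly the source
   term.  The same identity gives A (X + 2/5 J) = 2k I, so A is invertible.  Then
   Y = J + C^T X has generator 1 + z_t + z_(t-1), which is d_t once -3 +- sqrt 5 is
   written as 2 rho, 2 sigma. *)

(* Indices live in 'I_p.+2, the ring Z/kZ with k = p.+2 >= 2, so that the shifts
   i +- 1 and the differences j - i of circulant matrices are computed modulo k. *)
Section ZpIndex.
Variable p : nat.

Lemma val_Zp_sub (i j : 'I_p.+2) : (j - i : 'I_p.+2) = ((j + p.+2 - i) %% p.+2)%N :> nat.
Proof. by rewrite /= modnDmr addnBA // ltnW. Qed.

Lemma val_Zp1 : (1 : 'I_p.+2) = 1%N :> nat.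
Proof. by rewrite /= modn_small. Qed.

Lemma val_ZpN1 : (-1 : 'I_p.+2) = p.+1 :> nat.
Proof. by rewrite /= (modn_small (_ : 1 < p.+2)%N) // modn_small. Qed.

Lemma eq_ZpN1 (t : 'I_p.+2) : (t == -1) = (t == p.+1 :> nat).
Proof. by rewrite -val_eqE /= (modn_small (_ : 1 < p.+2)%N) // subSS subn0 modn_small. Qed.

Lemma val_Zp_sub1 (t : 'I_p.+2) : t != 0 -> (t - 1 : 'I_p.+2) = t.-1 :> nat.
Proof.
rewrite val_Zp_sub val_Zp1 -val_eqE /= => t0.
have {}t0 : (0 < t)%N by rewrite lt0n.
have -> : (t + p.+2 - 1 = t.-1 + p.+2)%N by lia.
by rewrite modnDr modn_small //; have := ltn_ord t; lia.
Qed.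

Lemma val_Zp_add1 (t : 'I_p.+2) : t != -1 -> (t + 1 : 'I_p.+2) = t.+1 :> nat.
Proof.
rewrite eq_ZpN1 /= (modn_small (_ : 1 < p.+2)%N) // => t0.
by rewrite addn1 modn_small //; have := ltn_ord t; lia.
Qed.

End ZpIndex.

Section Circulant.
Variables (R : pzRingType) (p : nat).
Local Notation k := p.+2.
Implicit Types (f g : 'I_k -> R).

Definition circulant f : 'M[R]_k := \matrix_(i, j) f (j - i).
Definition dirac (a : 'I_k) : 'I_k -> R := fun t => (t == a)%:R.

Lemma circulantE f i j : circulant f i j = f (j - i).
Proof. exact: mxE. Qed.

Lemma eq_circulant f g : f =1 g -> circulant f = circulant g.
Proof. by move=> fg; apply/matrixP => i j; rewrite !circulantE fg. Qed.

Lemma circ_circulant (f : nat -> R) : circ k f = circulant (fun t => f t).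
Proof. by apply/matrixP => i j; rewrite !mxE val_Zp_sub. Qed.

Lemma circulantD f g : circulant (f \+ g) = circulant f + circulant g.
Proof. by apply/matrixP => i j; rewrite !mxE. Qed.

Lemma trmx_circulant f : (circulant f)^T = circulant (fun t => f (- t)).
Proof. by apply/matrixP => i j; rewrite !mxE opprB. Qed.

Lemma circulant_dirac0 : circulant (dirac 0) = 1%:M.
Proof. by apply/matrixP => i j; rewrite !mxE /dirac subr_eq0 eq_sym. Qed.

Lemma mul_circulant_dirac n a (M : 'M[R]_(k, n)) i j :
  (circulant (dirac a) *m M) i j = M (i + a) j.
Proof.
rewrite mxE (bigD1 (i + a)) //= big1 => [|l nl].
  by rewrite circulantE addrAC subrr add0r /dirac eqxx mul1r addr0.
by rewrite circulantE /dirac subr_eq addrC (negbTE nl) mul0r.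
Qed.

End Circulant.
Arguments dirac {R p} a.

Section WheelMatrix.
Variables (R : pzRingType) (p : nat).
Local Notation k := p.+2.
Local Notation C := (circ k (wheel_c k) : 'M[R]_k).

Lemma wheel_circulant : C = circulant (dirac 0 \+ dirac (-1)).
Proof.
rewrite circ_circulant; apply: eq_circulant => t /=.
have t0 : (t == 0) = (t == 0%N :> nat) by rewrite -val_eqE.
rewrite /wheel_c /dirac eq_ZpN1 t0 /=.
by case: eqP => [->|_] /=; [rewrite addr0 | rewrite add0r; case: (_ == _)].
Qed.

Lemma mul_wheel n (M : 'M[R]_(k, n)) i j : (C *m M) i j = M i j + M (i - 1) j.
Proof.
by rewrite wheel_circulant circulantD mulmxDl [LHS]mxE !mul_circulant_dirac addr0.
Qed.

Lemma mul_tr_wheel n (M : 'M[R]_(k, n)) i j : (C^T *m M) i j = M i j + M (i + 1) j.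
Proof.
rewrite wheel_circulant trmx_circulant (@eq_circulant _ _ _ (dirac 0 \+ dirac 1)) => [|t].
  by rewrite circulantD mulmxDl [LHS]mxE !mul_circulant_dirac addr0.
by rewrite /= /dirac oppr_eq0 eqr_opp.
Qed.

Lemma wheel_gram_mul_circulant z :
  (C *m C^T + 1%:M) *m circulant z =
  circulant (fun t => z t *+ 3 + z (t - 1) + z (t + 1)).
Proof.
apply/matrixP => i j.
rewrite mulmxDl mul1mx -mulmxA [LHS]mxE mul_wheel !mul_tr_wheel !circulantE subrK.
have -> : j - (i + 1) = j - i - 1 by rewrite opprD addrA.
have -> : j - (i - 1) = j - i + 1 by rewrite opprB addrA addrAC.
set a := z (j - i); set b := z (j - i - 1); set c := z (j - i + 1).
by rewrite !mulrSr mulr0n add0r addrAC [a + b]addrC -!addrA [c + a]addrC !(addrCA b).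
Qed.

End WheelMatrix.

Lemma exprSS_root (R : comPzRingType) (x : R) t :
  x ^+ 2 + 3 * x + 1 = 0 -> x ^+ t.+2 = - x ^+ t - 3 * x ^+ t.+1.
Proof.
move=> hx; rewrite -addn2 exprD (exprSr x t).
have -> : x ^+ 2 = - 3 * x - 1 by rewrite -[LHS]subr0 -hx; ring.
ring.
Qed.

Section WheelSequence.
Variables (F : numFieldType) (rho sigma : F) (k : nat).
Hypotheses (rho_sigmaD : rho + sigma = -3) (rho_sigmaM : rho * sigma = 1).
Hypotheses (rhoXk_neq1 : rho ^+ k != 1) (sigmaXk_neq1 : sigma ^+ k != 1).

(* The general solution -2/5 + a rho^t + b sigma^t of the recurrence, with a, b chosen
   so that the sequence returns to its start after k steps up to a jump of 2k. *)
Definition wheel_seq (t : nat) : F :=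
  - (2 / 5) + 2 * k%:R / (rho - sigma) *
    (rho ^+ t / (1 - rho ^+ k) - sigma ^+ t / (1 - sigma ^+ k)).

Lemma subr_rho_sigma_sqr : (rho - sigma) ^+ 2 = 5.
Proof.
have -> : (rho - sigma) ^+ 2 = (rho + sigma) ^+ 2 - 4 * (rho * sigma) by ring.
by rewrite rho_sigmaD rho_sigmaM; ring.
Qed.

Lemma subr_rho_sigma_neq0 : rho - sigma != 0.
Proof.
apply/negP => /eqP h; move: subr_rho_sigma_sqr.
by rewrite h expr0n /= => /eqP; rewrite eq_sym pnatr_eq0.
Qed.

Lemma rho_root : rho ^+ 2 + 3 * rho + 1 = 0.
Proof.
have -> : 3 = - (rho + sigma) :> F by rewrite rho_sigmaD opprK.
by rewrite -rho_sigmaM; ring.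
Qed.

Lemma sigma_root : sigma ^+ 2 + 3 * sigma + 1 = 0.
Proof.
have -> : 3 = - (rho + sigma) :> F by rewrite rho_sigmaD opprK.
by rewrite -rho_sigmaM; ring.
Qed.

Let rhoXk_subr_neq0 : 1 - rho ^+ k != 0. Proof. by rewrite subr_eq0 eq_sym. Qed.
Let sigmaXk_subr_neq0 : 1 - sigma ^+ k != 0. Proof. by rewrite subr_eq0 eq_sym. Qed.

Lemma wheel_seq_rec t : wheel_seq t + wheel_seq t.+1 *+ 3 + wheel_seq t.+2 = -2.
Proof.
rewrite /wheel_seq !(exprSS_root _ rho_root) !(exprSS_root _ sigma_root).
by field; rewrite subr_rho_sigma_neq0 rhoXk_subr_neq0 sigmaXk_subr_neq0.
Qed.

Lemma wheel_seq_period : wheel_seq k = wheel_seq 0.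
Proof.
rewrite /wheel_seq !expr0.
by field; rewrite subr_rho_sigma_neq0 rhoXk_subr_neq0 sigmaXk_subr_neq0.
Qed.

Lemma wheel_seq_jump : wheel_seq k.+1 = wheel_seq 1 - 2 * k%:R.
Proof.
rewrite /wheel_seq !exprSr !expr0 !mul1r.
by field; rewrite subr_rho_sigma_neq0 rhoXk_subr_neq0 sigmaXk_subr_neq0.
Qed.

End WheelSequence.

Section WheelCirculant.
Variables (F : realFieldType) (rho sigma : F) (p : nat).
Local Notation k := p.+2.
Hypotheses (rho_sigmaD : rho + sigma = -3) (rho_sigmaM : rho * sigma = 1).
Hypotheses (rhoXk_neq1 : rho ^+ k != 1) (sigmaXk_neq1 : sigma ^+ k != 1).
Local Notation z t := (wheel_seq rho sigma k (t%R : 'I_k)).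
Local Notation C := (circ k (wheel_c k) : 'M[F]_k).
Local Notation A := (C *m C^T + 1%:M).
Local Notation Z := (circulant (fun t : 'I_k => wheel_seq rho sigma k t)).

Lemma wheel_seq_cyclic_rec (t : 'I_k) :
  z t *+ 3 + z (t - 1) + z (t + 1) = 2 * (k%:R *+ (t == 0) - 1).
Proof.
have rec := wheel_seq_rec rho_sigmaD rho_sigmaM rhoXk_neq1 sigmaXk_neq1.
have period := wheel_seq_period rho_sigmaD rho_sigmaM rhoXk_neq1 sigmaXk_neq1.
have jump := wheel_seq_jump rho_sigmaD rho_sigmaM rhoXk_neq1 sigmaXk_neq1.
have [->|t0] := eqVneq t 0.
  rewrite sub0r add0r val_ZpN1 val_Zp1 /=.
  by move: (rec p.+1); rewrite period jump; lra.
have [->|tN1] := eqVneq t (-1).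
  rewrite addNr val_Zp_sub1 ?oppr_eq0 ?oner_eq0 // val_ZpN1 /=.
  by move: (rec p); rewrite period; lra.
rewrite val_Zp_sub1 // val_Zp_add1 //=.
have t_gt0 : (0 < t)%N by rewrite lt0n; move: t0; rewrite -val_eqE.
by move: (rec t.-1); rewrite prednK //; lra.
Qed.

Lemma wheel_gram_mul_seq : A *m Z = 2 *: (k%:R%:M - Jmx k).
Proof.
rewrite wheel_gram_mul_circulant; apply/matrixP => i j.
by rewrite circulantE wheel_seq_cyclic_rec !mxE subr_eq0 eq_sym.
Qed.

Lemma wheel_gram_unit : A \in unitmx.
Proof.
(* A (Z + 2/5 J) = 2k I, the constant 2/5 cancelling the -2 of the recurrence. *)
suff /mulmx1_unit[] : A *m circulant (fun t => (z t + 2 / 5) / (2 * k%:R)) = 1%:M by [].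
rewrite wheel_gram_mul_circulant -circulant_dirac0; apply: eq_circulant => t.
have k_neq0 : (k%:R : F) != 0 by rewrite pnatr_eq0.
move: (wheel_seq_cyclic_rec t) k_neq0; rewrite /dirac.
move: (z t) (z (t - 1)) (z (t + 1)) (k%:R : F) => a b c K rec K0.
rewrite -[a *+ 3]mulr_natr in rec; rewrite -[_ *+ 3]mulr_natr.
apply: (@eq_trans _ _ ((a * 3 + b + c + 2) / (2 * K))); first by field; rewrite K0.
by rewrite rec; case: (t == 0) => /=; field; rewrite K0.
Qed.

Lemma wheel_X : 2 *: (invmx A *m (k%:R%:M - Jmx k)) = Z.
Proof. by rewrite scalemxAr -wheel_gram_mul_seq mulKmx // wheel_gram_unit. Qed.

Lemma wheel_Y : Jmx k + C^T *m Z = circulant (fun t => 1 + z t + z (t - 1)).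
Proof.
apply/matrixP => i j.
by rewrite [LHS]mxE mul_tr_wheel !circulantE /Jmx mxE opprD !addrA.
Qed.

End WheelCirculant.

Lemma exprn_neq1 (R : numDomainType) (x : R) k : (0 < k)%N -> `|x| != 1 -> x ^+ k != 1.
Proof.
move=> k_gt0; apply: contra => /eqP xk1.
by rewrite -(pexpr_eq1 k_gt0) ?normr_ge0 // -normrX xk1 normr1.
Qed.

Lemma subrX_scale (R : comPzRingType) (c y : R) n :
  c ^+ n - (c * y) ^+ n = c ^+ n * (1 - y ^+ n).
Proof. by rewrite exprMn mulrBr mulr1. Qed.

Section WheelClosedForm.
Variable R : rcfType.
Local Notation w := (Num.sqrt 5 : R).

Definition wheel_rho : R := (-3 + Num.sqrt 5) / 2.
Definition wheel_sigma : R := (-3 - Num.sqrt 5) / 2.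

Lemma sqr_sqrt5 : w ^+ 2 = 5.
Proof. by rewrite sqr_sqrtr. Qed.

Lemma sqrt5_bounds : 2 < w < 3.
Proof.
have := sqr_sqrt5; have := sqrtr_ge0 (5 : R) => w0 w5.
by apply/andP; split; nra.
Qed.

Lemma sqrt5_neq0 : w != 0.
Proof. by rewrite sqrtr_eq0 -ltNge ltr0n. Qed.

Lemma mul2_wheel_rho : 2 * wheel_rho = -3 + w.
Proof. by rewrite /wheel_rho; field. Qed.

Lemma mul2_wheel_sigma : 2 * wheel_sigma = -3 - w.
Proof. by rewrite /wheel_sigma; field. Qed.

Lemma wheel_rho_sub_sigma : wheel_rho - wheel_sigma = w.
Proof. by rewrite /wheel_rho /wheel_sigma; field. Qed.

Lemma wheel_rho_sigmaD : wheel_rho + wheel_sigma = -3.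
Proof. by rewrite /wheel_rho /wheel_sigma; field. Qed.

Lemma wheel_rho_sigmaM : wheel_rho * wheel_sigma = 1.
Proof.
rewrite /wheel_rho /wheel_sigma.
have -> : (-3 + w) / 2 * ((-3 - w) / 2) = (9 - w ^+ 2) / 4 by field.
by rewrite sqr_sqrt5; field.
Qed.

Lemma wheel_rho_neq0 : wheel_rho != 0.
Proof. by apply: contra_eq_neq wheel_rho_sigmaM => ->; rewrite mul0r eq_sym oner_eq0. Qed.

Lemma wheel_sigmaE : wheel_sigma = wheel_rho^-1.
Proof. by apply: (mulfI wheel_rho_neq0); rewrite wheel_rho_sigmaM mulfV ?wheel_rho_neq0. Qed.

Lemma wheel_rhoX_neq1 k : (0 < k)%N -> wheel_rho ^+ k != 1.
Proof.
move=> k_gt0; apply: exprn_neq1 => //; have /andP[w2 w3] := sqrt5_bounds.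
by rewrite lt_eqF // ltr_norml /wheel_rho; apply/andP; split; lra.
Qed.

Lemma wheel_sigmaX_neq1 k : (0 < k)%N -> wheel_sigma ^+ k != 1.
Proof.
move=> k_gt0; apply: exprn_neq1 => //; have /andP[w2 w3] := sqrt5_bounds.
by rewrite gt_eqF // ltr_normr /wheel_sigma; apply/orP; right; lra.
Qed.

Lemma inv_5_add_sqrt5 : (5 + w)^-1 = (wheel_rho + 1) / (2 * w).
Proof.
have /andP[w2 w3] := sqrt5_bounds.
have w5 : 5 + w != 0 by rewrite gt_eqF //; lra.
apply: (mulIf w5); rewrite mulVf // /wheel_rho.
have -> : ((-3 + w) / 2 + 1) / (2 * w) * (5 + w) = (w ^+ 2 + 4 * w - 5) / (4 * w).
  by field; rewrite sqrt5_neq0.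
by rewrite sqr_sqrt5; field; rewrite sqrt5_neq0.
Qed.

Definition wheel_d (n j : nat) : R :=
  let a := -3 + Num.sqrt 5 in
  let b := -3 - Num.sqrt 5 in
  if j == 0%N then
    5^-1 + (4 * (n.-1)%:R / Num.sqrt 5) *
      ((2 ^+ (n - 2) + a ^+ (n - 2)) / (2 ^+ (n - 1) - a ^+ (n - 1))
       - (2 ^+ (n - 2) + b ^+ (n - 2)) / (2 ^+ (n - 1) - b ^+ (n - 1)))
  else
    5^-1 + (2 ^+ (n + 1 - j) * (n.-1)%:R / (5 + Num.sqrt 5)) *
      (2 * a ^+ j.-1 / (2 ^+ (n - 1) - a ^+ (n - 1))
       - b ^+ j / (2 ^+ (n - 1) - b ^+ (n - 1))).

Local Notation z k t := (wheel_seq wheel_rho wheel_sigma k t).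

Lemma wheel_d0 k : (0 < k)%N -> wheel_d k.+1 0 = 1 + z k 0 + z k k.-1.
Proof.
move=> k_gt0; rewrite /wheel_d /wheel_seq /= !subSS subn0 subn1.
have e2k : (2 : R) ^+ k = 2 * 2 ^+ k.-1 by rewrite -exprS prednK.
have := wheel_rhoX_neq1 k_gt0; have := wheel_rho_neq0.
rewrite -mul2_wheel_rho -mul2_wheel_sigma wheel_rho_sub_sigma !subrX_scale.
rewrite !(exprMn _ 2) e2k wheel_sigmaE !exprVn.
(* What is left is a rational identity in rho and sqrt 5; generalizing keeps [field]
   from unfolding [wheel_rho]. *)
move: wheel_rho w sqrt5_neq0 => x y y0 x0 xk1.
have xk1' : 1 - x ^+ k != 0 by rewrite subr_eq0 eq_sym.
have xk1'' : x ^+ k - 1 != 0 by rewrite subr_eq0.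
by field; rewrite xk1' xk1'' ?x0 y0 !expf_neq0 // pnatr_eq0.
Qed.

Lemma wheel_dS k u : (u < k)%N -> wheel_d k.+1 u.+1 = 1 + z k u.+1 + z k u.
Proof.
move=> lt_uk; rewrite /wheel_d /wheel_seq /= subSS subn0.
have [r def_k] : exists r, k = (u + r).+1 by exists (k - u.+1)%N; lia.
have -> : (k.+1 + 1 - u.+1 = r.+2)%N by lia.
have e2k : (2 : R) ^+ k = 2 * 2 ^+ u * 2 ^+ r by rewrite def_k exprS exprD mulrA.
have e2r : (2 : R) ^+ r.+2 = 4 * 2 ^+ r by rewrite !exprS; ring.
have := wheel_rhoX_neq1 (leq_ltn_trans (leq0n u) lt_uk); have := wheel_rho_neq0.
rewrite -mul2_wheel_rho -mul2_wheel_sigma wheel_rho_sub_sigma !subrX_scale.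
rewrite !(exprMn _ 2) e2k e2r inv_5_add_sqrt5 wheel_sigmaE !exprVn !exprS.
move: wheel_rho w sqrt5_neq0 => x y y0 x0 xk1.
have xk1' : 1 - x ^+ k != 0 by rewrite subr_eq0 eq_sym.
have xk1'' : x ^+ k - 1 != 0 by rewrite subr_eq0.
by field; rewrite xk1' xk1'' ?x0 y0 !expf_neq0 // pnatr_eq0.
Qed.

Lemma wheel_d_cyclic p (t : 'I_p.+2) :
  wheel_d p.+3 t = 1 + z p.+2 t + z p.+2 ((t - 1)%R : 'I_p.+2).
Proof.
have [->|t0] := eqVneq t 0; first by rewrite sub0r val_ZpN1 wheel_d0.
have t_gt0 : (0 < t)%N by rewrite lt0n; move: t0; rewrite -val_eqE.
rewrite val_Zp_sub1 // -[in LHS](prednK t_gt0) wheel_dS prednK //.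
by have := ltn_ord t; lia.
Qed.

End WheelClosedForm.

Theorem mainTheorem4 (R : rcfType) (n : nat) (hn : (4 <= n)%N) :
  let k := n.-1 in
  let C : 'M[R]_k := circ k (wheel_c k) in
  let X : 'M[R]_k :=
    (2 : R) *: (invmx (C *m C^T + 1%:M) *m ((k%:R : R)%:M - Jmx k)) in
  let Y : 'M[R]_k := Jmx k + C^T *m X in
  let s5 : R := Num.sqrt 5 in
  let a : R := -3 + s5 in
  let b : R := -3 - s5 in
  let d : nat -> R := fun j =>
    if j == 0%N then
      5^-1 + (4 * (n.-1)%:R / s5) *
        ((2 ^+ (n - 2) + a ^+ (n - 2)) / (2 ^+ (n - 1) - a ^+ (n - 1))
         - (2 ^+ (n - 2) + b ^+ (n - 2)) / (2 ^+ (n - 1) - b ^+ (n - 1)))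
    else
      5^-1 + (2 ^+ (n + 1 - j) * (n.-1)%:R / (5 + s5)) *
        (2 * a ^+ j.-1 / (2 ^+ (n - 1) - a ^+ (n - 1))
         - b ^+ j / (2 ^+ (n - 1) - b ^+ (n - 1))) in
  Y = circ k d.
Proof.
case: n hn => [|[|[|[|m]]]] // _ k C X Y s5 a b d.
have k_gt0 : (0 < k)%N by [].
rewrite /Y /X (wheel_X (wheel_rho_sigmaD R) (wheel_rho_sigmaM R)
  (wheel_rhoX_neq1 R k_gt0) (wheel_sigmaX_neq1 R k_gt0)).
rewrite wheel_Y circ_circulant; apply: eq_circulant => t.
exact: esym (wheel_d_cyclic R t).
Qed.
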